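(* Let $\mathcal{A} = \{\boldsymbol{a}_k\} \subset \mathbb{C}^n$ be an atomic set such that any $r \le n$ distinct atoms of $\mathcal{A}$ are linearly independent, and let $\boldsymbol{x} \in \mathbb{C}^n$. For a parameter $\boldsymbol{\theta} = \{\boldsymbol{a}_j, d_j : j = 1,\dots,r\}$ with $r$ a positive integer, $\boldsymbol{a}_j \in \mathcal{A}$ and $d_j > 0$, and for $\beta > 0$, define $$\mathcal{L}(\boldsymbol{\theta}, \beta) = \frac{1}{2}\sum_{j=1}^{r} d_j + \frac{1}{2}\, \boldsymbol{x}^H \Big(\sum_{j=1}^{r} d_j\, \boldsymbol{a}_j \boldsymbol{a}_j^H + \beta \boldsymbol{I}\Big)^{-1} \boldsymbol{x}.$$ Then $$\|\boldsymbol{x}\|_{\mathcal{A}} = \inf_{\boldsymbol{\theta}} \lim_{\beta \to 0^+} \mathcal{L}(\boldsymbol{\theta}, \beta) = \lim_{\beta \to 0^+} \inf_{\boldsymbol{\theta}} \mathcal{L}(\boldsymbol{\theta}, \beta),$$ where the infima range over all such $\boldsymbol{\theta}$ (including all $r$), and limits may take the value $+\infty$.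
   Context: For an atomic set $\mathcal{A} \subset \mathbb{C}^n$, the atomic norm of $\boldsymbol{x} \in \mathbb{C}^n$ is $\|\boldsymbol{x}\|_{\mathcal{A}} = \inf\{ \sum_{k=1}^{r} |s_k| : r \in \mathbb{N},\ s_k \in \mathbb{C},\ \boldsymbol{a}_k \in \mathcal{A},\ \boldsymbol{x} = \sum_{k=1}^{r} s_k \boldsymbol{a}_k \}$. $\boldsymbol{I}$ is the $n\times n$ identity and $^H$ denotes conjugate transpose. *)

From HB Require Import structures.
From mathcomp Require Import all_boot all_order all_algebra.
From mathcomp Require Import all_classical all_reals all_analysis.
From mathcomp Require Import complex.
Set Implicit Arguments. Unset Strict Implicit. Unset Printing Implicit Defensive.
Import Order.TTheory GRing.Theory Num.Theory.
Local Open Scope ring_scope.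
Local Open Scope classical_set_scope.

Definition adjmx (R : realType) (m p : nat) (M : 'M[R[i]]_(m, p)) : 'M[R[i]]_(p, m) :=
  (map_mx Num.conj M)^T.

Definition atoms_lin_indep (R : realType) (n : nat) (A : set 'cV[R[i]]_n) : Prop :=
  forall (r : nat) (a : 'I_r -> 'cV[R[i]]_n),
    (r <= n)%N -> injective a -> (forall j, A (a j)) ->
    forall c : 'I_r -> R[i], \sum_(j < r) c j *: a j = 0 -> forall j, c j = 0.

(** Atomic norm (extended-real valued; +oo when x has no representation). *)
Definition atomic_norm (R : realType) (n : nat) (A : set 'cV[R[i]]_n)
    (x : 'cV[R[i]]_n) : \bar R :=
  ereal_inf [set y : \bar R | exists (r : nat) (s : 'I_r -> R[i])
      (a : 'I_r -> 'cV[R[i]]_n),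
      [/\ (0 < r)%N, (forall k, A (a k)), x = \sum_(k < r) s k *: a k
        & y = (\sum_(k < r) complex.Re `|s k|)%:E]].

Definition valid_theta (R : realType) (n : nat) (A : set 'cV[R[i]]_n)
    (r : nat) (a : 'I_r -> 'cV[R[i]]_n) (d : 'I_r -> R) : Prop :=
  [/\ (0 < r)%N, (forall j, A (a j)) & (forall j, 0 < d j)].

(** L(theta, beta) = 1/2 sum d_j + 1/2 x^H (sum d_j a_j a_j^H + beta I)^-1 x.
    The quadratic form is real for beta > 0 (Hermitian positive definite
    matrix); we take its real part to view it in R. *)
Definition Lcost (R : realType) (n : nat) (x : 'cV[R[i]]_n)
    (r : nat) (a : 'I_r -> 'cV[R[i]]_n) (d : 'I_r -> R) (beta : R) : R :=
  2^-1 * (\sum_(j < r) d j)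
  + 2^-1 * complex.Re
      ((adjmx x *m invmx (\sum_(j < r) ((d j)%:C%C *: (a j *m adjmx (a j)))
                          + (beta%:C%C)%:M) *m x) 0 0).

From HB Require Import structures.
From mathcomp Require Import all_boot all_order all_algebra.
From mathcomp Require Import all_classical all_reals all_analysis.
From mathcomp Require Import complex.
From mathcomp Require Import ring lra.
Import Order.TTheory GRing.Theory Num.Theory Normc.
Local Open Scope ring_scope.
Local Open Scope classical_set_scope.
Set Implicit Arguments. Unset Strict Implicit. Unset Printing Implicit Defensive.

(* For fixed theta, L(theta, beta) is nonincreasing in beta (the matrix
   M = sum_j d_j a_j a_j^H + beta I grows with beta), so both limits are
   suprema over beta > 0.  With y = M^-1 x and s_j = d_j a_j^H y we have
   x = sum_j s_j a_j + beta y, and completing squares gives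
     sum_j |s_j| + |x - sum_j s_j a_j|^2 / (2 beta) <= L(theta, beta),
   while for a representation x = sum_j s_j a_j the weights d_j = |s_j| + eps
   give L(theta, beta) <= sum_j |s_j| + r eps for every beta.  The second bound
   yields inf_theta L(theta, beta) <= ||x||_A.  For the first, representations
   with a small residual cost almost ||x||_A: expanding the residual in a
   finite family of atoms spanning the span of A costs little, and if x lies
   outside that span the residual is bounded away from 0.  Hence for small beta
   every L(theta, beta) is at least close to ||x||_A. *)

Section ComplexModulus.
Variable R : realType.
Implicit Types z w : R[i].

Lemma Re_normc z : complex.Re `|z| = normc z.
Proof. by case: z. Qed.

Lemma normc_ge0 z : 0 <= normc z.
Proof. by case: z => a b; rewrite sqrtr_ge0. Qed.

Lemma normc_conj z : normc z^* = normc z.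
Proof. by case: z => a b /=; rewrite sqrrN. Qed.

Lemma normc_real (r : R) : normc r%:C%C = `|r|.
Proof. by rewrite /= expr0n /= addr0 sqrtr_sqr. Qed.

(* [conjc_real] restated with [Num.conj], which is what [^*] means in
   [ring_scope]. *)
Lemma conj_real (r : R) : (r%:C%C)^* = r%:C%C :> R[i].
Proof. exact: conjc_real. Qed.

Lemma Re_conjM z : complex.Re (z^* * z) = normc z ^+ 2.
Proof.
by case: z => a b /=; rewrite sqr_sqrtr ?addr_ge0 ?sqr_ge0 // mulNr opprK !expr2.
Qed.

Lemma Re_le_normc z : complex.Re z <= normc z.
Proof.
case: z => a b /=; apply: le_trans (ler_norm a) _.
by rewrite -sqrtr_sqr ler_sqrt ?addr_ge0 ?sqr_ge0 // lerDl sqr_ge0.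
Qed.

Lemma Re_realM (r : R) z : complex.Re (r%:C%C * z) = r * complex.Re z.
Proof. by case: z => a b /=; rewrite mul0r subr0. Qed.

Lemma Re_conj z : complex.Re z^* = complex.Re z.
Proof. by case: z. Qed.

Lemma Re_add z w : complex.Re (z + w) = complex.Re z + complex.Re w.
Proof. by case: z; case: w. Qed.

Lemma Re_opp z : complex.Re (- z) = - complex.Re z.
Proof. by case: z. Qed.

(* [raddf_sum] for [Re], stated at type [R[i]]: rewriting with [raddf_sum]
   itself leaves the summands typed in [Rcomplex R]. *)
Lemma Re_sum I (r : seq I) (P : pred I) (f : I -> R[i]) :
  complex.Re (\sum_(i <- r | P i) f i) = \sum_(i <- r | P i) complex.Re (f i).
Proof. exact: raddf_sum. Qed.

Lemma normc_sum I (r : seq I) (P : pred I) (f : I -> R[i]) :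
  normc (\sum_(i <- r | P i) f i) <= \sum_(i <- r | P i) normc (f i).
Proof.
elim/big_rec2: _ => [|i y s _ ys]; first by rewrite normc0.
by apply: le_trans (le_normcD _ _) _; rewrite lerD2l.
Qed.
End ComplexModulus.

Section InnerProduct.
Variables (R : realType) (n : nat).
Implicit Types u v w : 'cV[R[i]]_n.

Definition inner u v : R[i] := \sum_i (u i 0)^* * v i 0.

Definition sqnorm v : R := complex.Re (inner v v).

Lemma adjmx_mulE u v : (adjmx u *m v) 0 0 = inner u v.
Proof. by rewrite !mxE; apply: eq_bigr => i _; rewrite !mxE. Qed.

Lemma innerDr u v w : inner u (v + w) = inner u v + inner u w.
Proof. by rewrite /inner -big_split; apply: eq_bigr => i _; rewrite mxE mulrDr. Qed.

Lemma innerZr u c v : inner u (c *: v) = c * inner u v.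
Proof. by rewrite /inner mulr_sumr; apply: eq_bigr => i _; rewrite mxE mulrCA. Qed.

Lemma innerBr u v w : inner u (v - w) = inner u v - inner u w.
Proof. by rewrite innerDr -scaleN1r innerZr mulN1r. Qed.

Lemma inner_sumr u m (f : 'I_m -> 'cV[R[i]]_n) :
  inner u (\sum_j f j) = \sum_j inner u (f j).
Proof. by rewrite /inner exchange_big; apply: eq_bigr => i _; rewrite summxE mulr_sumr. Qed.

Lemma inner_conj u v : inner v u = (inner u v)^*.
Proof.
rewrite /inner rmorph_sum; apply: eq_bigr => i _.
by rewrite rmorphM /= conjCK mulrC.
Qed.

Lemma innerDl u v w : inner (u + v) w = inner u w + inner v w.
Proof. by rewrite inner_conj innerDr rmorphD /= -!inner_conj. Qed.

Lemma innerZl c u v : inner (c *: u) v = c^* * inner u v.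
Proof. by rewrite inner_conj innerZr rmorphM /= -inner_conj. Qed.

Lemma innerBl u v w : inner (u - v) w = inner u w - inner v w.
Proof. by rewrite innerDl -scaleN1r innerZl rmorphN1 mulN1r. Qed.

Lemma inner_suml m (f : 'I_m -> 'cV[R[i]]_n) v :
  inner (\sum_j f j) v = \sum_j inner (f j) v.
Proof.
by rewrite inner_conj inner_sumr rmorph_sum; apply: eq_bigr => j _; rewrite [RHS]inner_conj.
Qed.

Lemma sqnormE v : sqnorm v = \sum_i normc (v i 0) ^+ 2.
Proof. by rewrite /sqnorm /inner Re_sum; apply: eq_bigr => i _; rewrite Re_conjM. Qed.

Lemma sqnorm_ge0 v : 0 <= sqnorm v.
Proof. by rewrite sqnormE sumr_ge0 // => i _; rewrite sqr_ge0. Qed.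

Lemma sqnorm_eq0 v : sqnorm v = 0 -> v = 0.
Proof.
rewrite sqnormE => /psumr_eq0P v0; apply/matrixP => i j; rewrite ord1 mxE.
have /eqP := v0 (fun i _ => sqr_ge0 _) i isT.
by rewrite sqrf_eq0 => /eqP /eq0_normc.
Qed.

Lemma sqnormZ (r : R) v : sqnorm (r%:C%C *: v) = r ^+ 2 * sqnorm v.
Proof. by rewrite /sqnorm innerZl innerZr conj_real mulrA -rmorphM Re_realM expr2. Qed.

Lemma normc_coord_le_sqnorm v i : normc (v i 0) ^+ 2 <= sqnorm v.
Proof. by rewrite sqnormE (bigD1 i) //= lerDl sumr_ge0 // => j _; rewrite sqr_ge0. Qed.
End InnerProduct.

Section Covariance.
Variables (R : realType) (n m : nat).
Variables (a : 'I_m -> 'cV[R[i]]_n) (d : 'I_m -> R).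

Definition covmx (beta : R) : 'M[R[i]]_n :=
  \sum_(j < m) ((d j)%:C%C *: (a j *m adjmx (a j))) + (beta%:C%C)%:M.

Lemma covmx_mulmx beta v : covmx beta *m v =
  \sum_j ((d j)%:C%C * inner (a j) v) *: a j + beta%:C%C *: v.
Proof.
rewrite mulmxDl mulmx_suml mul_scalar_mx; congr (_ + _).
apply: eq_bigr => j _; rewrite -scalemxAl -mulmxA [adjmx _ *m _]mx11_scalar.
by rewrite adjmx_mulE mul_mx_scalar scalerA.
Qed.

Lemma inner_covmx_sym beta u v :
  inner u (covmx beta *m v) = inner (covmx beta *m u) v.
Proof.
rewrite !covmx_mulmx innerDr innerDl inner_sumr inner_suml innerZr innerZl.
rewrite conj_real; congr (_ + _); apply: eq_bigr => j _.
rewrite innerZr innerZl rmorphM /= conj_real -mulrA mulrC.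
by rewrite [inner u _]inner_conj mulrAC [RHS]mulrC mulrA.
Qed.

Lemma Re_inner_covmx beta y : complex.Re (inner y (covmx beta *m y)) =
  \sum_j d j * normc (inner (a j) y) ^+ 2 + beta * sqnorm y.
Proof.
rewrite covmx_mulmx innerDr inner_sumr innerZr Re_add Re_sum Re_realM.
congr (_ + _); apply: eq_bigr => j _.
by rewrite innerZr [inner y _]inner_conj mulrAC -mulrA Re_realM Re_conjM.
Qed.

Lemma Re_inner_covmx_le beta1 beta2 y : beta1 <= beta2 ->
  complex.Re (inner y (covmx beta1 *m y)) <= complex.Re (inner y (covmx beta2 *m y)).
Proof. by move=> le12; rewrite !Re_inner_covmx lerD2l ler_wpM2r ?sqnorm_ge0. Qed.

Hypothesis d_ge0 : forall j, 0 <= d j.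

Lemma Re_inner_covmx_ge beta y : 0 <= beta ->
  beta * sqnorm y <= complex.Re (inner y (covmx beta *m y)).
Proof.
move=> beta0; rewrite Re_inner_covmx lerDr sumr_ge0 // => j _.
by rewrite mulr_ge0 // sqr_ge0.
Qed.

Lemma covmx_unit beta : 0 < beta -> covmx beta \in unitmx.
Proof.
move=> beta0; rewrite unitmxE unitfE -det_tr; apply/negP => /det0P [v v0 vM].
have Mv : covmx beta *m v^T = 0 by rewrite -[covmx beta]trmxK -trmx_mul vM trmx0.
have := Re_inner_covmx_ge (v^T) (ltW beta0).
rewrite Mv /inner big1 => [|i _]; last by rewrite !mxE mulr0.
rewrite pmulr_rle0 // => vle0.
have /sqnorm_eq0/(congr1 trmx) : sqnorm v^T = 0 by apply/le_anti; rewrite vle0 sqnorm_ge0.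
by rewrite trmxK trmx0 => /eqP; rewrite (negPf v0).
Qed.
End Covariance.

Section Cost.
Variables (R : realType) (n m : nat) (x : 'cV[R[i]]_n).
Variables (a : 'I_m -> 'cV[R[i]]_n) (d : 'I_m -> R).
Hypothesis d_gt0 : forall j, 0 < d j.
Let d_ge0 j : 0 <= d j. Proof. exact: ltW. Qed.

Definition cov_solve beta := invmx (covmx a d beta) *m x.

Definition cov_quad beta := complex.Re (inner x (cov_solve beta)).

Definition cov_coef beta j := (d j)%:C%C * inner (a j) (cov_solve beta).

Lemma covmx_solve beta : 0 < beta -> covmx a d beta *m cov_solve beta = x.
Proof. by move=> beta0; rewrite mulKVmx // covmx_unit. Qed.

Lemma LcostE beta : Lcost x a d beta = 2^-1 * (\sum_j d j) + 2^-1 * cov_quad beta.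
Proof. by rewrite /Lcost -mulmxA adjmx_mulE. Qed.

Lemma cov_quadE beta : 0 < beta ->
  cov_quad beta = complex.Re (inner (cov_solve beta) (covmx a d beta *m cov_solve beta)).
Proof. by move=> beta0; rewrite /cov_quad -[in LHS](covmx_solve beta0) inner_covmx_sym. Qed.

Lemma Re_inner_cov_solve beta : complex.Re (inner (cov_solve beta) x) = cov_quad beta.
Proof. by rewrite inner_conj Re_conj. Qed.

(* [cov_quad] is the maximum of the concave form [z |-> 2 Re z^H x - z^H M z]. *)
Lemma cov_quad_ge beta z : 0 < beta ->
  2 * complex.Re (inner z x) - complex.Re (inner z (covmx a d beta *m z)) <= cov_quad beta.
Proof.
move=> beta0; set y := cov_solve beta.
have := Re_inner_covmx_ge a d_ge0 (z - y) (ltW beta0).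
rewrite mulmxBr covmx_solve // innerBl !innerBr [inner y (_ *m z)]inner_covmx_sym.
rewrite covmx_solve // [inner x z]inner_conj !(Re_add, Re_opp, Re_conj).
rewrite Re_inner_cov_solve.
have := mulr_ge0 (ltW beta0) (sqnorm_ge0 (z - y)); lra.
Qed.

Lemma cov_quad_le beta1 beta2 : 0 < beta1 -> beta1 <= beta2 ->
  cov_quad beta2 <= cov_quad beta1.
Proof.
move=> beta10 le12; set y := cov_solve beta2.
apply: le_trans (cov_quad_ge y beta10).
rewrite Re_inner_cov_solve mulr_natl mulr2n -addrA lerDl subr_ge0 cov_quadE.
  exact: Re_inner_covmx_le.
exact: lt_le_trans le12.
Qed.

Lemma le_Lcost beta1 beta2 : 0 < beta1 -> beta1 <= beta2 ->
  Lcost x a d beta2 <= Lcost x a d beta1.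
Proof.
move=> beta10 le12; rewrite !LcostE lerD2l.
by apply: ler_wpM2l; [rewrite invr_ge0 ler0n | exact: cov_quad_le].
Qed.

Lemma Lcost_ge_residual beta : 0 < beta ->
  \sum_j normc (cov_coef beta j) + sqnorm (x - \sum_j cov_coef beta j *: a j) / (2 * beta)
  <= Lcost x a d beta.
Proof.
move=> beta0; set y := cov_solve beta.
have -> : x - \sum_j cov_coef beta j *: a j = beta%:C%C *: y.
  by rewrite -{1}(covmx_solve beta0) covmx_mulmx addrAC subrr add0r.
rewrite sqnormZ LcostE cov_quadE // Re_inner_covmx.
have -> : beta ^+ 2 * sqnorm y / (2 * beta) = 2^-1 * (beta * sqnorm y).
  by field; rewrite gt_eqF.
rewrite mulrDr addrA lerD2r -mulrDr -big_split /= mulr_sumr.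
apply: ler_sum => j _; rewrite /cov_coef normcM normc_real ger0_norm //.
set w := normc _; rewrite -subr_ge0.
have -> : 2^-1 * (d j + d j * w ^+ 2) - d j * w = 2^-1 * (d j * (w - 1) ^+ 2).
  by field.
by rewrite mulr_ge0 ?invr_ge0 ?ler0n // mulr_ge0 // sqr_ge0.
Qed.

Lemma Lcost_le_rep beta (s : 'I_m -> R[i]) : 0 < beta -> x = \sum_j s j *: a j ->
  Lcost x a d beta <= 2^-1 * (\sum_j d j) + 2^-1 * \sum_j normc (s j) ^+ 2 / d j.
Proof.
move=> beta0 xE; rewrite LcostE lerD2l.
apply: ler_wpM2l; first by rewrite invr_ge0 ler0n.
set y := cov_solve beta.
have termwise j : 2 * complex.Re ((s j)^* * inner (a j) y)
    - d j * normc (inner (a j) y) ^+ 2 <= normc (s j) ^+ 2 / d j.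
  have := Re_le_normc ((s j)^* * inner (a j) y); rewrite normcM normc_conj.
  set S := normc (s j); set W := normc _ => ReSW.
  have sq : S ^+ 2 / d j - (2 * (S * W) - d j * W ^+ 2) = (S - d j * W) ^+ 2 / d j.
    by field; rewrite gt_eqF.
  apply: (@le_trans _ _ (2 * (S * W) - d j * W ^+ 2)).
    by rewrite lerD2r ler_pM2l.
  by rewrite -subr_ge0 sq divr_ge0 ?sqr_ge0.
have Qs : cov_quad beta = \sum_j complex.Re ((s j)^* * inner (a j) y).
  by rewrite /cov_quad {1}xE inner_suml Re_sum; apply: eq_bigr => j _; rewrite innerZl.
have QM := cov_quadE beta0; rewrite Re_inner_covmx in QM.
(* Expand one copy of [cov_quad] through the representation of [x] and the
   other through [M y = x]. *)
have -> : cov_quad beta = 2 * cov_quad beta - cov_quad beta by ring.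
rewrite {1}Qs QM mulr_sumr opprD addrA -sumrB -[X in _ <= X]addr0.
apply: lerD; first by apply: ler_sum => j _; exact: termwise.
by rewrite oppr_le0 mulr_ge0 ?sqnorm_ge0 // ltW.
Qed.
End Cost.

Section AtomSpan.
Variables (R : realType) (n : nat) (A : set 'cV[R[i]]_n).

Definition atoms_mx m (b : 'I_m -> 'cV[R[i]]_n) : 'M[R[i]]_(m, n) :=
  \matrix_(i, j) b i j 0.

Lemma row_atoms_mx m (b : 'I_m -> 'cV[R[i]]_n) i : (row i (atoms_mx b))^T = b i.
Proof. by apply/matrixP => j k; rewrite !mxE (ord1 k). Qed.

Lemma trmx_mul_atoms_mx m (b : 'I_m -> 'cV[R[i]]_n) (c : 'rV[R[i]]_m) :
  (c *m atoms_mx b)^T = \sum_i c 0 i *: b i.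
Proof.
rewrite mulmx_sum_row linear_sum; apply: eq_bigr => i _.
by rewrite linearZ /= row_atoms_mx.
Qed.

Definition spanning_atoms m (b : 'I_m -> 'cV[R[i]]_n) :=
  [/\ (0 < m)%N, (forall i, A (b i)) & forall v, A v -> (v^T <= atoms_mx b)%MS].

Lemma exists_spanning_atoms : (exists v, A v) ->
  exists m (b : 'I_m -> 'cV[R[i]]_n), spanning_atoms b.
Proof.
move=> [v0 Av0]; apply: contrapT => no_spanning.
suff rank_grows k : exists m (b : 'I_m -> 'cV[R[i]]_n),
    [/\ (0 < m)%N, (forall i, A (b i)) & (k <= \rank (atoms_mx b))%N].
  have [m [b [_ _]]] := rank_grows n.+1.
  by rewrite ltnNge rank_leq_col.
elim: k => [|k [m [b [m0 Ab rk]]]]; first by exists 1%N, (fun=> v0).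
have [v Av vNsub] : exists2 v, A v & ~~ (v^T <= atoms_mx b)%MS.
  apply: contrapT => all_sub; apply: no_spanning; exists m, b; split => // w Aw.
  by apply: contrapT => /negP wNsub; apply: all_sub; exists w.
pose X := col_mx (atoms_mx b) v^T.
exists (m + 1)%N, (fun i => (row i X)^T); split.
- by rewrite addn1.
- move=> i; rewrite -(fintype.splitK i); case: (fintype.split i) => j /=.
    by rewrite rowKu row_atoms_mx.
  rewrite rowKd (ord1 j); suff -> : (row 0 v^T)^T = v by [].
  by apply/matrixP => p q; rewrite !mxE (ord1 q).
- have -> : atoms_mx (fun i => (row i X)^T) = X by apply/matrixP => p q; rewrite !mxE.
  have sub_X : (atoms_mx b <= X)%MS by rewrite -addsmxE addsmxSl.
  by rewrite (leq_ltn_trans rk) // (ltn_leqif (mxrank_leqif_sup sub_X)) col_mx_sub submx_refl.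
Qed.

Lemma comb_sub_atoms_mx m (b : 'I_m -> 'cV[R[i]]_n) r (s : 'I_r -> R[i])
    (a : 'I_r -> 'cV[R[i]]_n) :
  spanning_atoms b -> (forall j, A (a j)) -> ((\sum_j s j *: a j)^T <= atoms_mx b)%MS.
Proof.
move=> [_ _ b_span] Aa; rewrite linear_sum; apply: summx_sub => j _.
by rewrite linearZ /= scalemx_sub // b_span.
Qed.

Lemma sub_atoms_mx_comb m (b : 'I_m -> 'cV[R[i]]_n) (w : 'cV[R[i]]_n) :
  (w^T <= atoms_mx b)%MS -> w = \sum_i (w^T *m pinvmx (atoms_mx b)) 0 i *: b i.
Proof. by move=> w_sub; rewrite -trmx_mul_atoms_mx mulmxKpV // trmxK. Qed.
End AtomSpan.

Lemma small_coords (R : realType) (n p : nat) (G : 'M[R[i]]_(n, p)) (gap : R) :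
  0 < gap -> exists2 del, 0 < del &
    forall e, sqnorm e < del -> \sum_k normc ((e^T *m G) 0 k) < gap.
Proof.
move=> gap0; set K := \sum_k \sum_j normc (G j k).
have K0 : 0 <= K by rewrite !sumr_ge0 // => k _; rewrite sumr_ge0 // => j _; exact: normc_ge0.
have K1 : 0 < K + 1 by rewrite ltr_wpDl.
set eta := gap / (K + 1).
have eta0 : 0 < eta by rewrite divr_gt0.
exists (eta ^+ 2) => [|e e_small]; first by rewrite exprn_gt0.
have coord_small j : normc (e j 0) <= eta.
  have := le_lt_trans (normc_coord_le_sqnorm e j) e_small.
  by rewrite ltr_pXn2r // ?nnegrE ?normc_ge0 ?(ltW eta0) //; apply: ltW.
apply: (@le_lt_trans _ _ (eta * K)).
  rewrite /K mulr_sumr; apply: ler_sum => k _; rewrite mxE mulr_sumr.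
  apply: le_trans (normc_sum _ _ _) _; apply: ler_sum => j _.
  by rewrite !mxE normcM ler_wpM2r ?normc_ge0.
by rewrite -[gap](divfK (lt0r_neq0 K1)) -/eta ltr_pM2l // ltrDl.
Qed.

Section AtomicNormSemicontinuity.
Variables (R : realType) (n : nat) (A : set 'cV[R[i]]_n).

Lemma atomic_norm_ge0 x : (0 <= atomic_norm A x)%E.
Proof.
apply: le_ereal_inf_tmp => _ [r [s [a [_ _ _ ->]]]].
by rewrite lee_fin sumr_ge0 // => j _; rewrite Re_normc normc_ge0.
Qed.

Lemma atomic_norm_le_comb r (s : 'I_r -> R[i]) (a : 'I_r -> 'cV[R[i]]_n) :
  (0 < r)%N -> (forall j, A (a j)) ->
  (atomic_norm A (\sum_j s j *: a j) <= (\sum_j normc (s j))%:E)%E.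
Proof.
by move=> r0 Aa; apply: ereal_inf_lbound; exists r, s, a.
Qed.

Lemma atomic_norm_le_cat r (s : 'I_r -> R[i]) (a : 'I_r -> 'cV[R[i]]_n)
    m (c : 'I_m -> R[i]) (b : 'I_m -> 'cV[R[i]]_n) :
  (0 < r)%N -> (forall j, A (a j)) -> (forall i, A (b i)) ->
  (atomic_norm A (\sum_j s j *: a j + \sum_i c i *: b i) <=
    (\sum_j normc (s j) + \sum_i normc (c i))%:E)%E.
Proof.
move=> r0 Aa Ab.
pose sc k := match fintype.split k with inl j => s j | inr i => c i end.
pose ab k := match fintype.split k with inl j => a j | inr i => b i end.
have sl j : fintype.split (lshift m j) = inl j := unsplitK (inl _ j).
have sr i : fintype.split (rshift r i) = inr i := unsplitK (inr _ i).
have -> : \sum_j s j *: a j + \sum_i c i *: b i = \sum_k sc k *: ab k.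
  by rewrite big_split_ord /sc /ab /=; congr (_ + _); apply: eq_bigr => j _; rewrite ?sl ?sr.
have -> : \sum_j normc (s j) + \sum_i normc (c i) = \sum_k normc (sc k).
  by rewrite big_split_ord /sc /=; congr (_ + _); apply: eq_bigr => j _; rewrite ?sl ?sr.
apply: atomic_norm_le_comb; first by rewrite ltn_addr.
by move=> k; rewrite /ab; case: (fintype.split k).
Qed.

Section Spanning.
Variables (m : nat) (b : 'I_m -> 'cV[R[i]]_n) (x : 'cV[R[i]]_n).
Hypothesis b_span : spanning_atoms A b.
Local Notation S := (atoms_mx b).

Lemma atomic_norm_near_in_span (M : R) : (x^T <= S)%MS ->
  (M%:E < atomic_norm A x)%E ->
  exists2 del, 0 < del & forall r (s : 'I_r -> R[i]) (a : 'I_r -> 'cV[R[i]]_n),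
    (0 < r)%N -> (forall j, A (a j)) -> sqnorm (x - \sum_j s j *: a j) < del ->
    M <= \sum_j normc (s j).
Proof.
move=> x_sub M_lt; have [m0 Ab _] := b_span.
have [N xN] : exists N : R, atomic_norm A x = N%:E.
  have := atomic_norm_le_comb (fun i => (x^T *m pinvmx S) 0 i) m0 Ab.
  rewrite -sub_atoms_mx_comb //; move: (atomic_norm_ge0 x).
  by case: (atomic_norm A x) => // N _ _; exists N.
rewrite xN lte_fin -subr_gt0 in M_lt.
have [del del0 small] := small_coords (pinvmx S) M_lt.
exists del => // r s a r0 Aa res_small.
set w := \sum_j s j *: a j in res_small *.
have res_sub : ((x - w)^T <= S)%MS.
  by rewrite linearB addmx_sub // eqmx_opp (comb_sub_atoms_mx _ b_span Aa).
have := atomic_norm_le_cat s (fun i => ((x - w)^T *m pinvmx S) 0 i) r0 Aa Ab.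
rewrite -/w -sub_atoms_mx_comb // addrC subrK xN lee_fin.
have := small _ res_small; lra.
Qed.

Lemma residual_ge_off_span : ~~ (x^T <= S)%MS ->
  exists2 del, 0 < del & forall r (s : 'I_r -> R[i]) (a : 'I_r -> 'cV[R[i]]_n),
    (forall j, A (a j)) -> del <= sqnorm (x - \sum_j s j *: a j).
Proof.
rewrite submxE => /matrix0Pn [i0 [k xk]]; rewrite (ord1 i0) in xk.
have gap0 : 0 < normc ((x^T *m cokermx S) 0 k).
  by rewrite lt_def normc_ge0 andbT; apply: contra xk => /eqP /eq0_normc ->.
have [del del0 small] := small_coords (cokermx S) gap0.
exists del => // r s a Aa; rewrite leNgt; apply/negP => /small.
have /eqP w_ker : ((\sum_j s j *: a j)^T *m cokermx S == 0).
  by rewrite -submxE (comb_sub_atoms_mx _ b_span Aa).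
rewrite linearB mulmxBl w_ker subr0 (bigD1 k) //= -[X in _ < X]addr0 ltrD2l.
by rewrite ltNge sumr_ge0 // => j _; exact: normc_ge0.
Qed.
End Spanning.

Lemma atomic_norm_lsc (x : 'cV[R[i]]_n) (M : R) : (M%:E < atomic_norm A x)%E ->
  exists2 del, 0 < del & forall r (s : 'I_r -> R[i]) (a : 'I_r -> 'cV[R[i]]_n),
    (0 < r)%N -> (forall j, A (a j)) -> sqnorm (x - \sum_j s j *: a j) < del ->
    M <= \sum_j normc (s j).
Proof.
move=> M_lt; have [[v Av]|noA] := pselect (exists v, A v); last first.
  by exists 1 => // r s a r0 Aa; exfalso; apply: noA; exists (a (Ordinal r0)).
have [m [b b_span]] := exists_spanning_atoms (ex_intro _ v Av).
have [x_sub|x_off] := boolP (x^T <= atoms_mx b)%MS.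
  exact: (atomic_norm_near_in_span b_span x_sub M_lt).
have [del del0 res_ge] := residual_ge_off_span b_span x_off.
by exists del => // r s a _ Aa; rewrite ltNge res_ge.
Qed.
End AtomicNormSemicontinuity.

Lemma Lcost_rep_bound (R : realType) (n : nat) (A : set 'cV[R[i]]_n)
    (x : 'cV[R[i]]_n) r (s : 'I_r -> R[i]) (a : 'I_r -> 'cV[R[i]]_n) (e : R) :
  (0 < r)%N -> (forall j, A (a j)) -> x = \sum_j s j *: a j -> 0 < e ->
  exists d, valid_theta A a d /\
    forall beta, 0 < beta -> Lcost x a d beta <= \sum_j normc (s j) + e.
Proof.
move=> r0 Aa xE e0; set eps := e / r%:R.
have eps0 : 0 < eps by rewrite divr_gt0 // ltr0n.
have d_gt0 j : 0 < normc (s j) + eps by rewrite ltr_wpDl // normc_ge0.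
exists (fun j => normc (s j) + eps); split => // beta beta0.
apply: le_trans (Lcost_le_rep d_gt0 beta0 xE) _.
have sq_le : \sum_j normc (s j) ^+ 2 / (normc (s j) + eps) <= \sum_j normc (s j).
  apply: ler_sum => j _.
  by rewrite ler_pdivrMr // expr2 ler_wpM2l ?normc_ge0 // lerDl ltW.
have sum_d : \sum_j (normc (s j) + eps) = \sum_j normc (s j) + e.
  by rewrite big_split /= sumr_const card_ord -mulr_natr divfK // pnatr_eq0 -lt0n.
rewrite sum_d.
have := ltW e0; lra.
Qed.

Lemma lee_of_fin_lt (R : realType) (N S : \bar R) :
  (forall M : R, (M%:E < N)%E -> (M%:E <= S)%E) -> (N <= S)%E.
Proof.
case: N => [r| |] le_S; last by rewrite leNye.
- apply/lee_subgt0Pr => e e0; rewrite -EFinB; apply: le_S.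
  by rewrite lte_fin ltrBlDr ltrDl.
- case: S le_S => [s| |] le_S; last 2 first.
  + by rewrite leey.
  + by have := le_S 0%R (ltry _).
  by have := le_S (s + 1)%R (ltry _); rewrite lee_fin gerDl ler10.
Qed.

Section Limits.
Variables (R : realType) (n : nat) (A : set 'cV[R[i]]_n) (x : 'cV[R[i]]_n).
Local Notation N := (atomic_norm A x).

Definition inf_Lcost (beta : R) : \bar R :=
  ereal_inf [set y : \bar R | exists (r : nat) (a : 'I_r -> 'cV[R[i]]_n)
     (d : 'I_r -> R), valid_theta A a d /\ y = (Lcost x a d beta)%:E].

Lemma Lcost_cvg r (a : 'I_r -> 'cV[R[i]]_n) d : valid_theta A a d ->
  (fun beta => (Lcost x a d beta)%:E) @ 0^'+ -->
  ereal_sup ((fun beta => (Lcost x a d beta)%:E) @` `]0, +oo[).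
Proof.
move=> [_ _ d_gt0]; apply: nonincreasing_at_right_cvge; first by rewrite bnd_simp.
move=> b1 b2; rewrite !in_itv /= !andbT => b10 _ le12.
by rewrite lee_fin le_Lcost.
Qed.

Lemma lim_LcostE r (a : 'I_r -> 'cV[R[i]]_n) d : valid_theta A a d ->
  lim ((fun beta => (Lcost x a d beta)%:E) @ 0^'+) =
  ereal_sup ((fun beta => (Lcost x a d beta)%:E) @` `]0, +oo[).
Proof. by move=> v; apply: cvg_lim; [exact: ereal_hausdorff | exact: Lcost_cvg]. Qed.

Lemma inf_Lcost_cvg : inf_Lcost @ 0^'+ --> ereal_sup (inf_Lcost @` `]0%R, +oo[).
Proof.
apply: nonincreasing_at_right_cvge; first by rewrite bnd_simp.
move=> b1 b2; rewrite !in_itv /= !andbT => b10 _ le12.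
apply: le_ereal_inf_tmp => _ [r [a [d [[r0 Aa d_gt0] ->]]]].
apply: (@le_trans _ _ (Lcost x a d b2)%:E); first by apply: ereal_inf_lbound; exists r, a, d.
by rewrite lee_fin le_Lcost.
Qed.

Lemma inf_Lcost_le_atomic_norm beta : 0 < beta -> (inf_Lcost beta <= N)%E.
Proof.
move=> beta0; apply: le_ereal_inf_tmp => _ [r [s [a [r0 Aa xE ->]]]].
apply/lee_addgt0Pr => e e0.
have [d [v Ld]] := Lcost_rep_bound r0 Aa xE e0.
apply: le_trans (ereal_inf_lbound _) _; first by exists r, a, d.
by rewrite -EFinD lee_fin (le_trans (Ld _ beta0)).
Qed.

Lemma atomic_norm_le_sup_inf_Lcost : (N <= ereal_sup (inf_Lcost @` `]0%R, +oo[))%E.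
Proof.
apply: lee_of_fin_lt => M M_lt; have [del del0 near_ge] := atomic_norm_lsc M_lt.
have M1 : 0 < `|M| + 1 by rewrite ltr_wpDl.
pose beta := del / (2 * (`|M| + 1)).
have beta0 : 0 < beta by rewrite divr_gt0 // mulr_gt0.
apply: le_trans (_ : (M%:E <= inf_Lcost beta)%E) (ereal_sup_ubound _); last first.
  by exists beta => //; rewrite /= in_itv /= andbT.
apply: le_ereal_inf_tmp => _ [r [a [d [[r0 Aa d_gt0] ->]]]].
rewrite lee_fin; apply: le_trans _ (Lcost_ge_residual x a d_gt0 beta0).
set s := cov_coef x a d beta; set res := sqnorm _.
have s_ge0 : 0 <= \sum_j normc (s j) by rewrite sumr_ge0 // => j _; exact: normc_ge0.
have [res_small|res_large] := ltP res del.
  have := near_ge r s a r0 Aa res_small.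
  have : 0 <= res / (2 * beta) by rewrite divr_ge0 ?sqnorm_ge0 // mulr_ge0 // ltW.
  lra.
have : `|M| + 1 <= res / (2 * beta).
  have -> : `|M| + 1 = del / (2 * beta) by rewrite /beta; field; rewrite !gt_eqF.
  by rewrite ler_wpM2r // invr_ge0 mulr_ge0 // ltW.
have := ler_norm M; lra.
Qed.

Lemma sup_inf_LcostE : ereal_sup (inf_Lcost @` `]0%R, +oo[) = N.
Proof.
apply/le_anti; rewrite atomic_norm_le_sup_inf_Lcost andbT.
apply: ge_ereal_sup => _ [beta beta0 <-]; apply: inf_Lcost_le_atomic_norm.
by move: beta0; rewrite /= in_itv /= andbT.
Qed.

Lemma atomic_norm_le_lim_Lcost r (a : 'I_r -> 'cV[R[i]]_n) d : valid_theta A a d ->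
  (N <= lim ((fun beta => (Lcost x a d beta)%:E) @ 0^'+))%E.
Proof.
move=> v; rewrite lim_LcostE // -sup_inf_LcostE.
apply: ge_ereal_sup => _ [beta beta0 <-].
apply: le_trans (_ : (inf_Lcost beta <= (Lcost x a d beta)%:E)%E) (ereal_sup_ubound _).
  by apply: ereal_inf_lbound; exists r, a, d.
by exists beta.
Qed.

Lemma inf_lim_Lcost_le_atomic_norm :
  (ereal_inf [set y : \bar R | exists (r : nat) (a : 'I_r -> 'cV[R[i]]_n)
      (d : 'I_r -> R), valid_theta A a d /\
      y = lim ((fun beta => (Lcost x a d beta)%:E) @ 0^'+)] <= N)%E.
Proof.
apply: le_ereal_inf_tmp => _ [r [s [a [r0 Aa xE ->]]]].
apply/lee_addgt0Pr => e e0; have [d [v Ld]] := Lcost_rep_bound r0 Aa xE e0.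
apply: le_trans (ereal_inf_lbound _) _; first by exists r, a, d.
rewrite lim_LcostE //; apply: ge_ereal_sup => _ [beta beta0 <-].
by rewrite -EFinD lee_fin Ld //; move: beta0; rewrite /= in_itv /= andbT.
Qed.
End Limits.

Theorem theorem3 (R : realType) (n : nat) (A : set 'cV[R[i]]_n)
    (x : 'cV[R[i]]_n) :
  atoms_lin_indep A ->
  (* for every admissible theta, the limit beta -> 0+ exists in \bar R *)
  (forall (r : nat) (a : 'I_r -> 'cV[R[i]]_n) (d : 'I_r -> R),
      valid_theta A a d ->
      exists l : \bar R, (fun beta => (Lcost x a d beta)%:E) @ 0^'+ --> l) /\
  (* ||x||_A = inf_theta lim_{beta -> 0+} L(theta, beta) *)
  atomic_norm A x =
    ereal_inf [set y : \bar R | exists (r : nat) (a : 'I_r -> 'cV[R[i]]_n)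
        (d : 'I_r -> R), valid_theta A a d /\
        y = lim ((fun beta => (Lcost x a d beta)%:E) @ 0^'+)] /\
  (* ||x||_A = lim_{beta -> 0+} inf_theta L(theta, beta) *)
  (fun beta : R =>
     ereal_inf [set y : \bar R | exists (r : nat) (a : 'I_r -> 'cV[R[i]]_n)
        (d : 'I_r -> R), valid_theta A a d /\ y = (Lcost x a d beta)%:E])
    @ 0^'+ --> atomic_norm A x.
Proof.
move=> _; split; first by move=> r a d v; eexists; exact: (Lcost_cvg v).
split; last by rewrite -[X in _ --> X]sup_inf_LcostE; exact: inf_Lcost_cvg.
apply/le_anti; rewrite inf_lim_Lcost_le_atomic_norm andbT.
by apply: le_ereal_inf_tmp => _ [r [a [d [v ->]]]]; exact: atomic_norm_le_lim_Lcost.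
Qed.
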